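(* Let $r,t\geq 2$ be integers and let $G_r$ be any graph on $r$ vertices. Let $G_{r,t}$ be the graph obtained from $G_r$ by attaching $t$ new pendant vertices to each vertex of $G_r$ (so $G_{r,t}$ has $r(t+1)$ vertices). Then $\rho(G_{r,t})=r$, and for every integer $n\geq t$, $\rho(G_{r,t}\square K_n)=rt$.
   Context: All graphs are finite and simple. A set $P\subseteq V(G)$ is a packing of $G$ if $N[u]\cap N[v]=\emptyset$ for all distinct $u,v\in P$, where $N[u]$ is the closed neighborhood of $u$; the packing number $\rho(G)$ is the maximum cardinality of a packing of $G$. $K_n$ is the complete graph on $n$ vertices. The Cartesian product $G\square H$ has vertex set $V(G)\times V(H)$, with $(g,h)$ adjacent to $(g',h')$ iff ($gg'\in E(G)$ and $h=h'$) or ($g=g'$ and $hh'\in E(H)$). *)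

From mathcomp Require Import all_boot.
Set Implicit Arguments. Unset Strict Implicit. Unset Printing Implicit Defensive.

Definition simple_graph (T : finType) (e : rel T) : Prop :=
  symmetric e /\ irreflexive e.

Definition closed_nbhd (T : finType) (e : rel T) (u : T) : {set T} :=
  [set v | (v == u) || e u v].

Definition is_packingb (T : finType) (e : rel T) (P : {set T}) : bool :=
  [forall u in P, forall v in P,
     (u != v) ==> (closed_nbhd e u :&: closed_nbhd e v == set0)].

Definition packing_number (T : finType) (e : rel T) : nat :=
  \max_(P : {set T} | is_packingb e P) #|P|.

Definition cart_prod (T1 T2 : finType) (e1 : rel T1) (e2 : rel T2) : rel (T1 * T2) :=
  fun x y => (e1 x.1 y.1 && (x.2 == y.2)) || ((x.1 == y.1) && e2 x.2 y.2).

Definition complete_graph (n : nat) : rel 'I_n := fun i j => i != j.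

(* G_{r,t}: vertex (i, None) is the original vertex i of G_r; (i, Some j),
   j < t, is the j-th pendant vertex attached to i. *)
Definition pendant_graph (r t : nat) (e : rel 'I_r) : rel ('I_r * option 'I_t) :=
  fun x y =>
    match x.2, y.2 with
    | None, None => e x.1 y.1
    | None, Some _ => x.1 == y.1
    | Some _, None => x.1 == y.1
    | Some _, Some _ => false
    end.
Arguments pendant_graph : clear implicits.
Arguments complete_graph : clear implicits.

From mathcomp Require Import all_boot.

(* Both equalities are proved by matching bounds.
   - Upper bounds use a single counting principle: if f maps vertices to a
     finite type U and any two vertices with the same image share a vertex of
     their closed neighbourhoods, then f is injective on every packing, hence
     rho <= #|U|.  For G_{r,t} take f = (root index), U = 'I_r; for
     G_{r,t} \square K_n take f = (root index, pendant index or a default),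
     U = 'I_r * 'I_t.
   - Lower bounds exhibit explicit packings: one fixed pendant vertex at each
     root in G_{r,t}, and in the product the vertices ((i, j-th pendant), j),
     where the K_n coordinate j < t <= n separates pendants of the same root. *)

Set Implicit Arguments.
Unset Strict Implicit.
Unset Printing Implicit Defensive.

Section Packings.

Variables (T : finType) (e : rel T).

Lemma is_packingP (P : {set T}) :
  reflect (forall u v w, u \in P -> v \in P ->
             w \in closed_nbhd e u -> w \in closed_nbhd e v -> u = v)
          (is_packingb e P).
Proof.
apply: (iffP forallP) => [packP u v w uP vP wu wv | sepP u].
  have /implyP/(_ uP)/forallP/(_ v)/implyP/(_ vP) := packP u.
  case: (eqVneq u v) => // _ /eqP/setP/(_ w).
  by rewrite inE in_set0 wu wv.
apply/implyP=> uP; apply/forallP=> v; apply/implyP=> vP.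
apply/implyP=> neq_uv; apply/eqP/setP=> w; rewrite inE in_set0.
apply/negbTE/andP=> -[wu wv].
by rewrite (sepP u v w) ?eqxx in neq_uv.
Qed.

Lemma packing_le_packing_number (P : {set T}) :
  is_packingb e P -> #|P| <= packing_number e.
Proof. exact: leq_bigmax_cond. Qed.

(* Counting principle for upper bounds: a map whose fibres consist of
   vertices with overlapping closed neighbourhoods is injective on packings. *)
Lemma packing_number_le_card (U : finType) (f : T -> U) :
  (forall u v, f u = f v ->
     exists2 w, w \in closed_nbhd e u & w \in closed_nbhd e v) ->
  packing_number e <= #|U|.
Proof.
move=> fibreP; apply/bigmax_leqP => P /is_packingP packP.
rewrite -(card_in_imset (f := f)) ?max_card // => u v uP vP /fibreP [w wu wv].
exact: packP wu wv.
Qed.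

End Packings.

Lemma closed_nbhd_cart_complete (T : finType) (e : rel T) (n : nat)
    (v w : T * 'I_n) :
  (w \in closed_nbhd (cart_prod e (complete_graph n)) v) =
  (w.1 == v.1) || (w.1 \in closed_nbhd e v.1) && (w.2 == v.2).
Proof.
case: v w => [v1 v2] [w1 w2]; rewrite !inE /cart_prod /complete_graph /=.
rewrite -!pair_eqE /= [v1 == w1]eq_sym [v2 == w2]eq_sym.
by case: (w1 =P v1); case: (w2 =P v2); rewrite ?andbT ?andbF ?orbT ?orbF.
Qed.

Section PendantGraph.

Variables (r t : nat) (e : rel 'I_r).
Notation G := (pendant_graph r t e).
Notation vertex := ('I_r * option 'I_t)%type.

Lemma root_in_closed_nbhd (x : vertex) : (x.1, None) \in closed_nbhd G x.
Proof. by case: x => a [j|]; rewrite inE /pendant_graph /= ?eqxx ?orbT. Qed.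

Lemma closed_nbhd_pendant (a : 'I_r) (j : 'I_t) (w : vertex) :
  w \in closed_nbhd G (a, Some j) -> w = (a, Some j) \/ w = (a, None).
Proof.
case: w => b [k|]; rewrite inE /pendant_graph /= ?orbF.
  by move/eqP; left.
by case/orP => [/eqP [] //|/eqP <-]; right.
Qed.

Lemma closed_nbhd_same_root (u v : vertex) : u.1 = v.1 ->
  exists2 w, w \in closed_nbhd G u & w \in closed_nbhd G v.
Proof.
move=> eq_uv; exists (u.1, None); first exact: root_in_closed_nbhd.
by rewrite eq_uv root_in_closed_nbhd.
Qed.

Variable n : nat.
Notation H := (cart_prod G (complete_graph n)).

Lemma closed_nbhd_pendant_prod (a : 'I_r) (j : 'I_t) (h : 'I_n)
    (w : vertex * 'I_n) :
  w \in closed_nbhd H ((a, Some j), h) ->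
  w.1 = (a, Some j) \/ w = ((a, None), h).
Proof.
rewrite closed_nbhd_cart_complete => /orP [/eqP -> | /andP [wG /eqP w2]].
  by left.
case: (closed_nbhd_pendant wG) => w1; first by left.
by right; case: w w1 w2 {wG} => ? ? /= -> ->.
Qed.

Lemma closed_nbhd_prod_same_root (u v : vertex * 'I_n) :
  u.1.1 = v.1.1 -> [\/ u.1.2 = v.1.2, u.1.2 = None | v.1.2 = None] ->
  exists2 w, w \in closed_nbhd H u & w \in closed_nbhd H v.
Proof.
case: u v => [[a s] h] [[b s'] h'] /= <- [<- | -> | ->].
- by exists ((a, s), h'); rewrite closed_nbhd_cart_complete eqxx.
- exists ((a, None), h'); rewrite closed_nbhd_cart_complete ?eqxx //=.
  by rewrite (root_in_closed_nbhd (a, s')) orbT.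
- exists ((a, None), h); rewrite closed_nbhd_cart_complete ?eqxx ?orbT //=.
  by rewrite (root_in_closed_nbhd (a, s)) orbT.
Qed.

Hypothesis t_gt0 : 0 < t.
Let j0 : 'I_t := Ordinal t_gt0.

(* rho(G_{r,t}) <= r: members of a packing have distinct roots. *)
Lemma packing_number_pendant_le : packing_number G <= r.
Proof.
have := packing_number_le_card (f := fun x : vertex => x.1) closed_nbhd_same_root.
by rewrite card_ord.
Qed.

Lemma packing_number_pendant_ge : r <= packing_number G.
Proof.
pose P := [set (i, Some j0) | i : 'I_r].
have card_P : #|P| = r by rewrite card_imset ?card_ord // => a b [].
rewrite -[X in X <= _]card_P.
apply/packing_le_packing_number/is_packingP => u v w.
move=> /imsetP [a _ ->] /imsetP [b _ ->].
by move=> /closed_nbhd_pendant [] -> /closed_nbhd_pendant [] [->].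
Qed.

Lemma packing_number_prod_le : packing_number H <= r * t.
Proof.
pose f (u : vertex * 'I_n) := (u.1.1, odflt j0 u.1.2).
suff /packing_number_le_card : forall u v, f u = f v ->
    exists2 w, w \in closed_nbhd H u & w \in closed_nbhd H v.
  by rewrite card_prod !card_ord.
move=> [[a s] h] [[b s'] h'] [/= eq_ab eq_js].
apply: closed_nbhd_prod_same_root => //=.
by case: s s' eq_js => [j|] [k|] /= => [-> | | |]; constructor.
Qed.

Lemma packing_number_prod_ge : t <= n -> r * t <= packing_number H.
Proof.
move=> le_tn; pose g (x : 'I_r * 'I_t) := ((x.1, Some x.2), widen_ord le_tn x.2).
pose P := [set g x | x : 'I_r * 'I_t].
have -> : r * t = #|P|.
  by rewrite card_imset ?card_prod ?card_ord // => [[a j] [b k] [-> ->]].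
apply/packing_le_packing_number/is_packingP => u v w.
move=> /imsetP [[a j] _ ->] /imsetP [[b k] _ ->].
move=> /closed_nbhd_pendant_prod wu /closed_nbhd_pendant_prod wv; rewrite /g /=.
case: w wu wv => [[c s] m] /= [[-> ->] | [-> -> ->]].
  by case=> [[-> ->] | []].
by case=> [[] | [-> /val_inj ->]].
Qed.

End PendantGraph.

Theorem mainTheorem2 (r t : nat) (e : rel 'I_r) :
  2 <= r -> 2 <= t -> simple_graph e ->
  packing_number (pendant_graph r t e) = r /\
  (forall n : nat, t <= n ->
     packing_number (cart_prod (pendant_graph r t e) (complete_graph n)) = r * t).
Proof.
move=> _ t_ge2 _; have t_gt0 : 0 < t by apply: leq_trans t_ge2.
split=> [|n le_tn]; apply/eqP; rewrite eqn_leq.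
  by rewrite packing_number_pendant_le (packing_number_pendant_ge e t_gt0).
by rewrite (packing_number_prod_le e n t_gt0) packing_number_prod_ge.
Qed.
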